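(* Let $F$ be a finite field of order $p^n$, where $p$ is a prime and $n\geq 1$, and let $G=\Gamma(Tr(F))$. Then $$|E(G)|=\tfrac12\,p^n\,(p^{2n}-1)\,(p^{2n}-p^n-1).$$
   Context: For a ring $S$ with identity whose center is not all of $S$, the commuting graph $\Gamma(S)$ is the simple graph with vertex set $S\setminus Z(S)$ ($Z(S)$ the center), in which two distinct vertices $a,b$ are adjacent iff $ab=ba$; $E(G)$ denotes the edge set. $Tr(F)$ denotes the ring of all $2\times 2$ upper triangular matrices over $F$. *)

From mathcomp Require Import all_boot all_algebra.
Set Implicit Arguments. Unset Strict Implicit. Unset Printing Implicit Defensive.
Import GRing.Theory.
Local Open Scope ring_scope.

(* A finite ring given as a subring S (a finite set closed under the ring
   operations) of an ambient finite ring R; multiplication is that of R. *)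

Definition center_in (R : finNzRingType) (S : {set R}) : {set R} :=
  [set a in S | [forall b in S, a * b == b * a]].

Definition cgraph_vertices (R : finNzRingType) (S : {set R}) : {set R} :=
  S :\: center_in S.

Definition cgraph_edges (R : finNzRingType) (S : {set R}) : {set {set R}} :=
  [set e : {set R} | [exists a in cgraph_vertices S, exists b in cgraph_vertices S,
     [&& a != b, a * b == b * a & e == [set a; b]]]].

(* Tr(F): the ring of 2x2 upper triangular matrices over F, as a subring of
   M_2(F): the entry in row 1, column 0 (below the diagonal) is zero. *)
Definition Tr (F : finFieldType) : {set 'M[F]_2} :=
  [set A : 'M[F]_2 | A ord_max ord0 == 0].

From mathcomp Require Import all_boot all_algebra ring.
Set Implicit Arguments. Unset Strict Implicit. Unset Printing Implicit Defensive.
Import GRing.Theory.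

(* The commuting graph is regular: a noncentral A of Tr(F) commutes with
   exactly q^2 upper triangular matrices (q = |F|), those B whose off-diagonal
   entry and diagonal difference are proportional to those of A.  Its vertex
   set has q^3 - q elements (the centre being the q scalar matrices), so by
   the handshake lemma 2|E| = (q^3 - q)(q^2 - q - 1). *)

Section Handshake.
Variables (T : finType) (V : {set T}) (r : rel T).

Definition edge_set : {set {set T}} :=
  [set e | [exists a in V, exists b in V, [&& a != b, r a b & e == [set a; b]]]].

Definition nbhd (a : T) : {set T} := [set b in V | (a != b) && r a b].

Lemma eq_set2 (x y a b : T) : x != y ->
  ([set x; y] == [set a; b]) = ((x, y) == (a, b)) || ((x, y) == (b, a)).
Proof.
move=> xy; apply/eqP/idP => [exy|]; last first.
  by case/orP => /eqP [-> ->]; [|exact: setUC].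
have : x \in [set a; b] by rewrite -exy set21.
have : y \in [set a; b] by rewrite -exy set22.
rewrite !in_set2 !xpair_eqE.
do 2 case/orP => /eqP ?; subst; rewrite ?eqxx ?orbT //.
all: by rewrite eqxx in xy.
Qed.

Hypothesis r_sym : symmetric r.

Lemma handshake : (2 * #|edge_set|)%N = \sum_(a in V) #|nbhd a|.
Proof.
pose P := [set ab : T * T | (ab.1 \in V) && (ab.2 \in nbhd ab.1)].
have -> : \sum_(a in V) #|nbhd a| = #|P|.
  rewrite -sum1_card (eq_bigl (fun ab => (ab.1 \in V) && (ab.2 \in nbhd ab.1))).
    rewrite -(pair_big_dep _ (fun a => mem (nbhd a)) (fun _ _ => 1%N)).
    by apply: eq_bigr => a _; rewrite sum1_card.
  by move=> ab; rewrite inE.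
rewrite -[#|P|]sum1_card (partition_big (fun ab => [set ab.1; ab.2]) (mem edge_set)).
  rewrite /= mulnC -sum_nat_const; apply: eq_bigr => e.
  rewrite inE => /exists_inP [a aV /exists_inP [b bV /and3P [ab rab /eqP ->]]].
  have ab_ba : (a, b) != (b, a) by rewrite xpair_eqE (negbTE ab).
  rewrite sum1dep_card; transitivity #|[set (a, b); (b, a)]|.
    by rewrite cards2 ab_ba.
  apply: eq_card => -[x y]; rewrite !inE /=.
  apply/idP/andP => [|[/and4P [_ _ xy _]]]; last by rewrite eq_set2.
  case/orP => /eqP [-> ->]; first by rewrite aV bV ab rab eqxx.
  by rewrite aV bV eq_sym ab r_sym rab setUC eqxx.
move=> [a b]; rewrite !inE /= => /andP [aV /andP [bV /andP [ab rab]]].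
by apply/exists_inP; exists a => //; apply/exists_inP; exists b; rewrite ?ab ?rab ?eqxx.
Qed.

End Handshake.

Local Open Scope ring_scope.

Section CommutingGraph.
Variables (R : finNzRingType) (S : {set R}).

Definition centralizer_in (a : R) : {set R} := [set b in S | a * b == b * a].

Local Notation commr := (fun a b : R => a * b == b * a).

Lemma center_in_sub : center_in S \subset S.
Proof. by apply/subsetP => z; rewrite inE => /andP []. Qed.

Lemma center_in_sub_centralizer (a : R) :
  a \in S -> center_in S \subset centralizer_in a.
Proof.
move=> aS; apply/subsetP => z; rewrite !inE => /andP [zS /forall_inP zZ].
by rewrite zS eq_sym zZ.
Qed.

Lemma cgraph_edgesE : cgraph_edges S = edge_set (cgraph_vertices S) commr.
Proof. by []. Qed.

Lemma nbhd_cgraph (a : R) :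
  nbhd (cgraph_vertices S) commr a = (centralizer_in a :\: center_in S) :\ a.
Proof.
apply/setP => b; rewrite !inE [b == a]eq_sym.
by case: (a != b); case: (a * b == b * a); rewrite /= ?andbF ?andbT.
Qed.

Lemma card_nbhd_cgraph (a : R) : a \in cgraph_vertices S ->
  #|nbhd (cgraph_vertices S) commr a| = (#|centralizer_in a| - #|center_in S| - 1)%N.
Proof.
rewrite inE => /andP [aZ aS].
have aC : a \in centralizer_in a :\: center_in S by rewrite in_setD aZ inE aS eqxx.
have := cardsD1 a (centralizer_in a :\: center_in S).
rewrite aC (cardsDS (center_in_sub_centralizer aS)) nbhd_cgraph => ->.
by rewrite add1n subn1.
Qed.

Lemma double_card_cgraph_edges :
  (2 * #|cgraph_edges S|)%N =
  (\sum_(a in cgraph_vertices S) (#|centralizer_in a| - #|center_in S| - 1))%N.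
Proof.
rewrite cgraph_edgesE handshake => [|a b]; last by rewrite eq_sym.
by apply: eq_bigr => a; apply: card_nbhd_cgraph.
Qed.

End CommutingGraph.

Lemma card_line (F : finFieldType) (a b : F) : (a != 0) || (b != 0) ->
  #|[set xy : F * F | a * xy.1 == b * xy.2]| = #|F|.
Proof.
case: (eqVneq a 0) => [-> /= b0 | a0 _].
  have -> : [set xy : F * F | 0 * xy.1 == b * xy.2] = [set (x, 0) | x in [set: F]].
    apply/setP => -[x y]; rewrite !inE mul0r eq_sym mulf_eq0 (negbTE b0) /=.
    by apply/eqP/imsetP => [->|[x' _ [_ ->]]]; first by exists x.
  by rewrite card_imset ?cardsT // => x x' [].
have -> : [set xy : F * F | a * xy.1 == b * xy.2] = [set (b * y / a, y) | y in [set: F]].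
  apply/setP => -[x y]; rewrite !inE /=.
  apply/eqP/imsetP => [axy|[y' _ [-> ->]]]; last by rewrite mulrC divfK.
  by exists y; rewrite // -axy [a * x]mulrC mulfK.
by rewrite card_imset ?cardsT // => y y' [].
Qed.

Section UpperTriangular.
Variable F : finFieldType.
Local Notation i0 := (ord0 : 'I_2).
Local Notation i1 := (ord_max : 'I_2).
Local Notation q := #|F|.

Definition uppermx (x y z : F) : 'M[F]_2 :=
  \matrix_(i, j) if i == i0 then (if j == i0 then x else y) else (if j == i0 then 0 else z).

Lemma uppermx_Tr (x y z : F) : uppermx x y z \in Tr F.
Proof. by rewrite inE mxE. Qed.

Lemma Tr_uppermx (A : 'M[F]_2) :
  A \in Tr F -> A = uppermx (A i0 i0) (A i0 i1) (A i1 i1).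
Proof.
rewrite inE => /eqP A10; apply/matrixP => i j; rewrite mxE.
case: i => [[|[|?]] ?]; case: j => [[|[|?]] ?]; rewrite //=.
all: by rewrite -?A10; apply: congr2; apply: val_inj.
Qed.

Lemma uppermx_inj (x y z x' y' z' : F) :
  uppermx x y z = uppermx x' y' z' -> [/\ x = x', y = y' & z = z'].
Proof.
move/matrixP=> e; have := e i0 i0; have := e i0 i1; have := e i1 i1.
by rewrite !mxE.
Qed.

Lemma mul_uppermx (x y z x' y' z' : F) :
  uppermx x y z * uppermx x' y' z' = uppermx (x * x') (x * y' + y * z') (z * z').
Proof.
apply/matrixP => i j; rewrite -mulmxE !mxE big_ord_recl big_ord1 !mxE.
by case: i => [[|[|?]] ?]; case: j => [[|[|?]] ?]; rewrite //= ?mul0r ?mulr0 ?addr0 ?add0r.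
Qed.

Lemma uppermx_comm (x y z x' y' z' : F) :
  (uppermx x y z * uppermx x' y' z' == uppermx x' y' z' * uppermx x y z)
  = (y * (x' - z') == (x - z) * y').
Proof.
rewrite !mul_uppermx; apply/eqP/eqP => [/uppermx_inj [_ e _] | e].
  apply/eqP; rewrite -subr_eq0; apply/eqP.
  transitivity ((x' * y + y' * z) - (x * y' + y * z')); first ring.
  by rewrite e subrr.
congr uppermx; rewrite ?[x * x']mulrC ?[z * z']mulrC //.
apply/eqP; rewrite -subr_eq0; apply/eqP.
transitivity ((x - z) * y' - y * (x' - z')); first ring.
by rewrite e subrr.
Qed.

Lemma card_Tr : #|Tr F| = (q ^ 3)%N.
Proof.
have -> : Tr F = [set uppermx t.1.1 t.1.2 t.2 | t in [set: F * F * F]].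
  apply/setP => A; apply/idP/imsetP => [TA | [t _ ->]]; last exact: uppermx_Tr.
  by exists (A i0 i0, A i0 i1, A i1 i1); rewrite ?inE //; apply: Tr_uppermx.
rewrite card_imset ?cardsT ?card_prod; last first.
  by move=> [[x y] z] [[x' y'] z'] /= /uppermx_inj [-> -> ->].
by rewrite !expnS expn0 muln1 mulnA.
Qed.

Lemma mem_center_uppermx (x y z : F) :
  (uppermx x y z \in center_in (Tr F)) = (y == 0) && (x == z).
Proof.
rewrite inE uppermx_Tr; apply/forall_inP/andP => [cA | [/eqP-> /eqP->] B TB].
  have := cA _ (uppermx_Tr 1 0 0); have := cA _ (uppermx_Tr 0 1 0).
  by rewrite !uppermx_comm !subr0 !mulr0 !mulr1 eq_sym subr_eq0 => -> ->.
by rewrite (Tr_uppermx TB) uppermx_comm subrr !mul0r.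
Qed.

Lemma card_center_Tr : #|center_in (Tr F)| = q.
Proof.
have -> : center_in (Tr F) = [set uppermx x 0 x | x in [set: F]].
  apply/setP => A; apply/idP/imsetP => [ZA | [x _ ->]]; last first.
    by rewrite mem_center_uppermx !eqxx.
  have TA := subsetP (center_in_sub (Tr F)) A ZA.
  move: ZA; rewrite (Tr_uppermx TA) mem_center_uppermx => /andP [/eqP-> /eqP->].
  by exists (A i1 i1).
by rewrite card_imset ?cardsT // => x x' /uppermx_inj [].
Qed.

Lemma card_cgraph_vertices_Tr : #|cgraph_vertices (Tr F)| = (q ^ 3 - q)%N.
Proof. by rewrite cardsDS ?center_in_sub // card_Tr card_center_Tr. Qed.

Lemma centralizer_uppermx (x y z : F) :
  centralizer_in (Tr F) (uppermx x y z) =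
  [set uppermx (t.1.1 + t.2) t.1.2 t.2 |
     t in setX [set wv : F * F | y * wv.1 == (x - z) * wv.2] [set: F]].
Proof.
apply/setP => B; rewrite inE; apply/andP/imsetP => [[TB] | [[[w v] t] wvt ->]].
  rewrite {1 2}(Tr_uppermx TB) uppermx_comm => cB.
  exists (B i0 i0 - B i1 i1, B i0 i1, B i1 i1); first by rewrite !inE andbT.
  by rewrite /= subrK; apply: Tr_uppermx.
by split; rewrite ?uppermx_Tr // uppermx_comm addrK; move: wvt; rewrite !inE andbT.
Qed.

Lemma card_centralizer_Tr (A : 'M[F]_2) :
  A \in cgraph_vertices (Tr F) -> #|centralizer_in (Tr F) A| = (q ^ 2)%N.
Proof.
rewrite inE => /andP [nZA TA].
rewrite (Tr_uppermx TA) mem_center_uppermx negb_and in nZA.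
rewrite (Tr_uppermx TA) centralizer_uppermx card_imset; last first.
  move=> [[w v] t] [[w' v'] t'] /= /uppermx_inj [ew -> et].
  by rewrite et in ew *; rewrite (addIr _ ew).
by rewrite cardsX card_line ?cardsT // subr_eq0.
Qed.

End UpperTriangular.

Theorem corollary2p3 (F : finFieldType) (p n : nat) :
  prime p -> (0 < n)%N -> #|F| = (p ^ n)%N ->
  (2 * #|cgraph_edges (Tr F)|)%N
    = (p ^ n * (p ^ (2 * n) - 1) * (p ^ (2 * n) - p ^ n - 1))%N.
Proof.
(* Only |F| = p ^ n matters: the count holds for every finite field. *)
move=> _ _ cardF.
rewrite double_card_cgraph_edges.
rewrite (eq_bigr (fun _ => #|F| ^ 2 - #|F| - 1)%N) => [|A VA]; last first.
  by rewrite card_centralizer_Tr // card_center_Tr.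
rewrite sum_nat_const card_cgraph_vertices_Tr cardF (mulnC 2%N n) expnM.
by congr (_ * _)%N; rewrite mulnBr muln1 -expnS.
Qed.
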